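(* Assume each $f_a$ is differentiable on $(0,1]$ with $f_a'>0$, and set $\phi_a(u)=1/f_a'(u)$. Let $\mathcal D_0\subseteq\mathcal D$ be open, $\theta\in\mathcal D_0$, and assume that $\alpha$ and each $p_{\cdot,a}$ are differentiable at $\theta$. Assume the regularity condition $\sum_{a\in A}\frac{\partial}{\partial\theta_j}p_{\theta,a}=0$ and that $z(\theta)=\sum'_a\phi_a(p_{\theta,a})<+\infty$, where $\sum'$ denotes summation over $a\in A\setminus A_0(\theta)$, $A_0(\theta)=\{a:p_{\theta,a}=0\}$. Then $$\frac{\partial\alpha}{\partial\theta_j}(\theta)=-\frac1{z(\theta)}\sum\nolimits'_a\phi_a(p_{\theta,a})H_j(a).$$
   Context: Let $A$ be a finite or countable set, $\mathcal M_1^+(A)$ the probability distributions on $A$. For each $a$, $h_a:[0,1]\to\mathbb R$ is continuous, strictly concave, $h_a(0)=h_a(1)=0$, differentiable on $(0,1)$ with $h_a'=-f_a$, $f_a$ continuous on $(0,1]$; $I(p)=\sum_ah_a(p_a)$. $H_1,\dots,H_n:A\to\mathbb R$ are bounded below, $\langle p,X\rangle=\sum_ap_aX(a)$. $p^*$ satisfies the variational principle with parameters $\theta\in\mathbb R^n$ if $+\infty>I(p^* )-\sum_j\theta_j\langle p^*,H_j\rangle\ge I(p)-\sum_j\theta_j\langle p,H_j\rangle$ for all $p$. $\mathcal D$ is the set of $\theta$ for which such $p^*$ exists; it is unique and denoted $p_\theta$, and there is a real number $\alpha(\theta)$ with $f_a(p_{\theta,a})=-\alpha(\theta)-\sum_j\theta_jH_j(a)$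 for every $a$ with $p_{\theta,a}>0$. *)

From Stdlib Require Import Reals List.
Open Scope R_scope.

Definition lsum {A : Type} (f : A -> R) (F : list A) : R :=
  fold_right (fun a acc => f a + acc) 0 F.

(* Unconditional summation: [has_sumA f s] iff sum_{a in A} f a = s,
   i.e. the net of finite partial sums converges to s. *)
Definition has_sumA {A : Type} (f : A -> R) (s : R) : Prop :=
  forall eps, eps > 0 -> exists F0 : list A,
    forall F : list A, NoDup F -> incl F0 F -> Rabs (lsum f F - s) < eps.

Definition summableA {A : Type} (f : A -> R) : Prop := exists s, has_sumA f s.

Definition prob {A : Type} (p : A -> R) : Prop :=
  (forall a, 0 <= p a) /\ has_sumA p 1.

(* ---------- Vectors theta in R^n, modelled as nat -> R (coords j < n) --- *)
Fixpoint sumn (n : nat) (g : nat -> R) : R :=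
  match n with O => 0 | S k => sumn k g + g k end.

Fixpoint normn (n : nat) (x : nat -> R) : R :=
  match n with O => 0 | S k => Rmax (normn k x) (Rabs (x k)) end.

Definition vsub (x y : nat -> R) : nat -> R := fun k => x k - y k.

Definition shift (x : nat -> R) (j : nat) (t : R) : nat -> R :=
  fun k => if Nat.eqb k j then x k + t else x k.

Definition openn (n : nat) (D : (nat -> R) -> Prop) : Prop :=
  forall x, D x -> exists delta, delta > 0 /\
    forall y, normn n (vsub y x) < delta -> D y.

Definition differentiable_at (n : nat) (F : (nat -> R) -> R) (x : nat -> R) : Prop :=
  exists g : nat -> R, forall eps, eps > 0 -> exists delta, delta > 0 /\
    forall y, normn n (vsub y x) < delta ->
      Rabs (F y - F x - sumn n (fun k => g k * (y k - x k)))
        <= eps * normn n (vsub y x).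

Definition cont_within (P : R -> Prop) (g : R -> R) (u : R) : Prop :=
  forall eps, eps > 0 -> exists delta, delta > 0 /\
    forall v, P v -> Rabs (v - u) < delta -> Rabs (g v - g u) < eps.

Definition deriv_within (P : R -> Prop) (g : R -> R) (u l : R) : Prop :=
  forall eps, eps > 0 -> exists delta, delta > 0 /\
    forall v, P v -> v <> u -> Rabs (v - u) < delta ->
      Rabs ((g v - g u) / (v - u) - l) < eps.

Definition I01 (u : R) : Prop := 0 <= u <= 1.
Definition I01c (u : R) : Prop := 0 < u <= 1.

Definition strictly_concave01 (g : R -> R) : Prop :=
  forall x y t, I01 x -> I01 y -> x <> y -> 0 < t < 1 ->
    g (t * x + (1 - t) * y) > t * g x + (1 - t) * g y.

Definition standing_h_f {A : Type} (h f : A -> R -> R) : Prop :=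
  forall a,
    (forall u, I01 u -> cont_within I01 (h a) u) /\
    strictly_concave01 (h a) /\
    h a 0 = 0 /\ h a 1 = 0 /\
    (forall u, 0 < u < 1 -> derivable_pt_lim (h a) u (- f a u)) /\
    (forall u, I01c u -> cont_within I01c (f a) u).

(* Value of  I(p) - sum_j theta_j <p,H_j>  in the finite case, given the
   values Ip = I(p) and e j = <p,H_j>.  Terms with theta_j = 0 vanish
   (convention 0 * (+oo) = 0). *)
Definition vp_value (n : nat) (theta : nat -> R) (Ip : R) (e : nat -> R) : R :=
  Ip - sumn n (fun j => theta j * e j).

Definition vp_finite {A : Type} (h : A -> R -> R) (n : nat) (H : nat -> A -> R)
  (theta : nat -> R) (p : A -> R) (Ip : R) (e : nat -> R) : Prop :=
  has_sumA (fun a => h a (p a)) Ip /\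
  (forall j, (j < n)%nat -> theta j <> 0 -> has_sumA (fun a => p a * H j a) (e j)).

(* the expression I(p) - sum_j theta_j <p,H_j> equals +oo / contains -oo
   (H_j bounded below and h_a >= 0, so non-summability means +oo) *)
Definition vp_posinf {A : Type} (h : A -> R -> R) (n : nat) (H : nat -> A -> R)
  (theta : nat -> R) (p : A -> R) : Prop :=
  ~ summableA (fun a => h a (p a)) \/
  exists j, (j < n)%nat /\ theta j < 0 /\ ~ summableA (fun a => p a * H j a).

Definition vp_neginf {A : Type} (n : nat) (H : nat -> A -> R)
  (theta : nat -> R) (p : A -> R) : Prop :=
  exists j, (j < n)%nat /\ theta j > 0 /\ ~ summableA (fun a => p a * H j a).

(* pstar satisfies the variational principle with parameters theta:
   +oo > I(pstar) - sum theta_j <pstar,H_j> >= I(p) - sum theta_j <p,H_j>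
   for every p in M_1^+(A) for which the right-hand side is a well-defined
   element of [-oo,+oo]. *)
Definition variational_principle {A : Type} (h : A -> R -> R) (n : nat)
  (H : nat -> A -> R) (theta : nat -> R) (pstar : A -> R) : Prop :=
  prob pstar /\
  exists Is es, vp_finite h n H theta pstar Is es /\
  forall p, prob p ->
    ~ (vp_posinf h n H theta p /\ ~ vp_neginf n H theta p) /\
    (forall Ip e, vp_finite h n H theta p Ip e ->
       vp_value n theta Is es >= vp_value n theta Ip e).

(* restricted sum  sum'_a g a  over a in A \ A_0 (i.e. p a > 0) *)
Definition restr {A : Type} (p : A -> R) (g : A -> R) : A -> R :=
  fun a => if Rlt_dec 0 (p a) then g a else 0.

(* Write u_a(t) = p_{theta + t e_j, a} and d_a = u_a'(0).  For every a with
   p_{theta,a} > 0 the identity  f_a(u_a(t)) = -alpha(theta + t e_j)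
   - sum_k theta_k H_k(a) - t H_j(a)  holds for small t, and implicit
   differentiation gives  d_a = -phi_a(p_{theta,a}) (alpha_j + H_j(a)),
   where alpha_j is the partial derivative of alpha.  If p_{theta,a} = 0,
   then u_a >= 0 has a minimum at 0, so d_a = 0.  Summing the regularity
   condition sum_a d_a = 0 yields  0 = -alpha_j z - sum'_a phi_a H_j(a),
   and z > 0 because p_theta has positive mass somewhere. *)

From Stdlib Require Import Reals List Lra Lia ClassicalEpsilon FunctionalExtensionality.
Open Scope R_scope.

(* Every list is covered by a duplicate-free list (classically, since the
   equality of [A] need not be decidable). *)
Lemma nodup_cover {A : Type} (L : list A) : exists F, NoDup F /\ incl L F.
Proof.
  pose (dec := fun x y : A => excluded_middle_informative (x = y)).
  exists (nodup dec L); split.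
  - apply NoDup_nodup.
  - intros x Hx; apply nodup_In; exact Hx.
Qed.

Lemma lsum_plus {A : Type} (f g : A -> R) F :
  lsum (fun x => f x + g x) F = lsum f F + lsum g F.
Proof. induction F as [|a F IH]; simpl; [lra|]. rewrite IH; lra. Qed.

Lemma lsum_scal {A : Type} (f : A -> R) c F :
  lsum (fun x => c * f x) F = c * lsum f F.
Proof. induction F as [|a F IH]; simpl; [lra|]. rewrite IH; lra. Qed.

Lemma lsum_ge_term {A : Type} (g : A -> R) F a :
  (forall x, 0 <= g x) -> In a F -> g a <= lsum g F.
Proof.
  intros Hg. induction F as [|b F IH]; simpl; [tauto|].
  assert (Hnn : 0 <= lsum g F).
  { clear IH; induction F as [|c F IHF]; simpl; [lra|]. pose proof (Hg c); lra. }
  intros [<-|Hin]; [lra|]. pose proof (IH Hin); pose proof (Hg b); lra.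
Qed.

Lemma has_sum_ge_term {A : Type} (g : A -> R) s a :
  has_sumA g s -> (forall x, 0 <= g x) -> g a <= s.
Proof.
  intros Hs Hg. destruct (Rle_dec (g a) s) as [|Hgt]; [assumption|].
  destruct (Hs (g a - s)) as [F0 HF0]; [lra|].
  destruct (nodup_cover (a :: F0)) as [F [HF Hincl]].
  assert (Hclose : Rabs (lsum g F - s) < g a - s).
  { apply HF0; [exact HF|]. intros x Hx; apply Hincl; right; exact Hx. }
  pose proof (lsum_ge_term g F a Hg (Hincl a (or_introl eq_refl))).
  apply Rabs_def2 in Hclose; lra.
Qed.

Lemma has_sum_lincomb {A : Type} (f g : A -> R) b c s t :
  has_sumA f s -> has_sumA g t ->
  has_sumA (fun x => b * f x + c * g x) (b * s + c * t).
Proof.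
  intros Hf Hg eps Heps.
  set (k := Rabs b + Rabs c + 1).
  assert (Hk : 0 < k) by (unfold k; pose proof (Rabs_pos b); pose proof (Rabs_pos c); lra).
  destruct (Hf (eps / k)) as [F1 H1]; [apply Rdiv_lt_0_compat; lra|].
  destruct (Hg (eps / k)) as [F2 H2]; [apply Rdiv_lt_0_compat; lra|].
  exists (F1 ++ F2). intros F HF Hincl.
  assert (E1 : Rabs (lsum f F - s) < eps / k)
    by (apply H1; [exact HF|intros x Hx; apply Hincl, in_or_app; left; exact Hx]).
  assert (E2 : Rabs (lsum g F - t) < eps / k)
    by (apply H2; [exact HF|intros x Hx; apply Hincl, in_or_app; right; exact Hx]).
  rewrite lsum_plus, !lsum_scal.
  replace (b * lsum f F + c * lsum g F - (b * s + c * t))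
    with (b * (lsum f F - s) + c * (lsum g F - t)) by ring.
  eapply Rle_lt_trans; [apply Rabs_triang|]. rewrite !Rabs_mult.
  assert (Hsplit : eps = (Rabs b + Rabs c) * (eps / k) + eps / k).
  { transitivity (k * (eps / k)); [field; lra|unfold k; ring]. }
  assert (Hek : 0 < eps / k) by (apply Rdiv_lt_0_compat; lra).
  pose proof (Rmult_le_compat_l (Rabs b) _ _ (Rabs_pos b) (Rlt_le _ _ E1)).
  pose proof (Rmult_le_compat_l (Rabs c) _ _ (Rabs_pos c) (Rlt_le _ _ E2)).
  lra.
Qed.

Lemma prob_le1 {A : Type} (p : A -> R) a : prob p -> p a <= 1.
Proof. intros [Hnn Hsum]. exact (has_sum_ge_term p 1 a Hsum Hnn). Qed.

Lemma prob_charges_some {A : Type} (p : A -> R) : prob p -> exists a, p a > 0.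
Proof.
  intros [Hnn Hsum]. destruct (Hsum 1) as [F0 HF0]; [lra|].
  destruct (nodup_cover F0) as [F [HF Hincl]].
  specialize (HF0 F HF Hincl).
  destruct (Rlt_dec 0 (lsum p F)) as [Hpos|Hnpos].
  - clear HF0 Hincl HF. induction F as [|a F IH]; simpl in Hpos; [lra|].
    destruct (Rlt_dec 0 (p a)) as [Ha|Ha]; [exists a; exact Ha|].
    apply IH; pose proof (Hnn a); lra.
  - rewrite Rabs_left1 in HF0; lra.
Qed.

Lemma sumn_ext n (f g : nat -> R) : (forall k, f k = g k) -> sumn n f = sumn n g.
Proof. intros E; induction n as [|m IH]; simpl; [reflexivity|]. rewrite IH, E; reflexivity. Qed.

Lemma sumn_plus n (f g : nat -> R) : sumn n (fun k => f k + g k) = sumn n f + sumn n g.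
Proof. induction n as [|m IH]; simpl; [lra|]. rewrite IH; lra. Qed.

Lemma sumn_shift_increment n j x t (c : nat -> R) :
  sumn n (fun k => c k * (shift x j t k - x k)) = if Nat.ltb j n then c j * t else 0.
Proof.
  induction n as [|m IH]; simpl; [reflexivity|]. rewrite IH. unfold shift.
  destruct (Nat.eqb_spec m j) as [Heq|Hne];
    destruct (Nat.ltb_spec j m); destruct (Nat.ltb_spec j (S m)); try subst; try lia; ring.
Qed.

Lemma normn_shift n j x t :
  normn n (vsub (shift x j t) x) = if Nat.ltb j n then Rabs t else 0.
Proof.
  induction n as [|m IH]; simpl; [reflexivity|]. rewrite IH. unfold vsub, shift.
  destruct (Nat.eqb_spec m j) as [Heq|Hne];
    destruct (Nat.ltb_spec j m); destruct (Nat.ltb_spec j (S m)); try lia.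
  - replace (x m + t - x m) with t by ring. apply Rmax_right, Rabs_pos.
  - rewrite Rminus_diag, Rabs_R0. apply Rmax_left, Rabs_pos.
  - rewrite Rminus_diag, Rabs_R0. apply Rmax_left; lra.
Qed.

Lemma shift0 x j : shift x j 0 = x.
Proof. apply functional_extensionality; intro k. unfold shift. destruct (Nat.eqb k j); ring. Qed.

Lemma sumn_shift n j x t (c : nat -> R) : (j < n)%nat ->
  sumn n (fun k => shift x j t k * c k) = sumn n (fun k => x k * c k) + t * c j.
Proof.
  intros Hj.
  rewrite (sumn_ext n _ (fun k => x k * c k + c k * (shift x j t k - x k))) by (intro; ring).
  rewrite sumn_plus, sumn_shift_increment, (proj2 (Nat.ltb_lt j n) Hj). ring.
Qed.

Lemma openn_coordinate_line n D x j : (j < n)%nat -> openn n D -> D x ->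
  exists delta, delta > 0 /\ forall t, Rabs t < delta -> D (shift x j t).
Proof.
  intros Hj HD Hx. destruct (HD x Hx) as [delta [Hdelta Hball]].
  exists delta; split; [exact Hdelta|]. intros t Ht. apply Hball.
  rewrite normn_shift, (proj2 (Nat.ltb_lt j n) Hj). exact Ht.
Qed.

Definition has_gradient (n : nat) (F : (nat -> R) -> R) (x g : nat -> R) : Prop :=
  forall eps, eps > 0 -> exists delta, delta > 0 /\
    forall y, normn n (vsub y x) < delta ->
      Rabs (F y - F x - sumn n (fun k => g k * (y k - x k))) <= eps * normn n (vsub y x).

Lemma gradient_partial n F x g j : (j < n)%nat -> has_gradient n F x g ->
  derivable_pt_lim (fun t => F (shift x j t)) 0 (g j).
Proof.
  intros Hj Hg eps Heps. destruct (Hg (eps / 2)) as [delta [Hdelta Hy]]; [lra|].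
  exists (mkposreal delta Hdelta). intros t Ht0 Ht. simpl in Ht.
  specialize (Hy (shift x j t)).
  rewrite normn_shift, sumn_shift_increment, (proj2 (Nat.ltb_lt j n) Hj) in Hy.
  specialize (Hy Ht). rewrite Rplus_0_l, shift0.
  assert (Habs : 0 < Rabs t) by (apply Rabs_pos_lt; exact Ht0).
  replace ((F (shift x j t) - F x) / t - g j) with ((F (shift x j t) - F x - g j * t) / t)
    by (field; exact Ht0).
  unfold Rdiv. rewrite Rabs_mult, Rabs_inv.
  apply Rmult_le_compat_r with (r := / Rabs t) in Hy; [|left; apply Rinv_0_lt_compat, Habs].
  rewrite Rmult_assoc, Rinv_r in Hy by lra. lra.
Qed.

Lemma derivable_pos_near u d : derivable_pt_lim u 0 d -> u 0 > 0 ->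
  exists delta, delta > 0 /\ forall t, Rabs t < delta -> u t > 0.
Proof.
  intros Hu Hpos.
  destruct (derivable_continuous_pt u 0 (exist _ d Hu) (u 0) Hpos) as [delta [Hdelta Hc]].
  exists delta; split; [exact Hdelta|]. intros t Ht.
  destruct (Req_dec t 0) as [->|Ht0]; [exact Hpos|].
  assert (Hclose : R_dist (u t) (u 0) < u 0).
  { apply Hc; split; [split; [exact I|congruence]|].
    simpl; unfold R_dist. rewrite Rminus_0_r; exact Ht. }
  unfold R_dist in Hclose. apply Rabs_def2 in Hclose. lra.
Qed.

(* Extension of [g] off [P] by its tangent line at [u0]: if [g] has
   derivative [l] at [u0] within [P], the extension has derivative [l] at
   [u0] in the ordinary sense (which lets us use the ordinary chain rule). *)
Definition tangent_extension (P : R -> Prop) (g : R -> R) (u0 l : R) (v : R) : R :=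
  if excluded_middle_informative (P v) then g v else g u0 + l * (v - u0).

Lemma tangent_extension_in P g u0 l v : P v -> tangent_extension P g u0 l v = g v.
Proof.
  intros Hv. unfold tangent_extension.
  destruct (excluded_middle_informative (P v)); [reflexivity|contradiction].
Qed.

Lemma tangent_extension_derivable P g u0 l :
  deriv_within P g u0 l -> derivable_pt_lim (tangent_extension P g u0 l) u0 l.
Proof.
  intros Hg eps Heps. destruct (Hg eps Heps) as [delta [Hdelta Hq]].
  exists (mkposreal delta Hdelta). intros h Hh0 Hh. simpl in Hh.
  assert (Hbase : tangent_extension P g u0 l u0 = g u0).
  { unfold tangent_extension. destruct (excluded_middle_informative (P u0)); ring. }
  rewrite Hbase. unfold tangent_extension.
  destruct (excluded_middle_informative (P (u0 + h))) as [HP|HP].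
  - replace ((g (u0 + h) - g u0) / h) with ((g (u0 + h) - g u0) / (u0 + h - u0))
      by (f_equal; ring).
    apply Hq; [exact HP|intro E; apply Hh0; lra|]. replace (u0 + h - u0) with h by ring. exact Hh.
  - replace ((g u0 + l * (u0 + h - u0) - g u0) / h - l) with 0 by (field; exact Hh0).
    rewrite Rabs_R0; exact Heps.
Qed.

Lemma implicit_derivative (P : R -> Prop) (F u v : R -> R) (l du dv delta : R) :
  deriv_within P F (u 0) l -> l <> 0 ->
  derivable_pt_lim u 0 du -> derivable_pt_lim v 0 dv -> delta > 0 ->
  (forall t, Rabs t < delta -> P (u t) /\ F (u t) = v t) ->
  du = dv / l.
Proof.
  intros HF Hl Hu Hv Hdelta Hlocal.
  pose (G := tangent_extension P F (u 0) l).
  assert (Hcomp : derivable_pt_lim (comp G u) 0 (l * du))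
    by exact (derivable_pt_lim_comp u G 0 du l Hu (tangent_extension_derivable P F (u 0) l HF)).
  assert (Hcomp' : derivable_pt_lim (comp G u) 0 dv).
  { apply (derivable_pt_lim_locally_ext v _ 0 (- delta) delta); [lra| |exact Hv].
    intros t Ht. destruct (Hlocal t) as [HP HFv]; [apply Rabs_def1; lra|].
    unfold comp, G. rewrite tangent_extension_in by exact HP. symmetry; exact HFv. }
  pose proof (uniqueness_limite _ _ _ _ Hcomp Hcomp'). subst dv. field; exact Hl.
Qed.

Lemma derivable_local_min u d delta : derivable_pt_lim u 0 d -> delta > 0 ->
  (forall t, Rabs t < delta -> u 0 <= u t) -> d = 0.
Proof.
  intros Hu Hdelta Hmin.
  apply (deriv_minimum u (- delta) delta 0 (exist _ d Hu)); [lra|lra|].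
  intros t H1 H2. apply Hmin, Rabs_def1; lra.
Qed.

(* The setting of the theorem, restricted to the coordinate line through
   theta in direction e_j, which stays in D0 for small |t|; [dalpha] is the
   partial derivative of alpha in that direction. *)
Section PartialDerivatives.

Variables (A : Type) (f fp : A -> R -> R) (n : nat) (H : nat -> A -> R)
  (D0 : (nat -> R) -> Prop) (p : (nat -> R) -> A -> R) (alpha : (nat -> R) -> R)
  (theta : nat -> R) (j : nat) (dalpha : R).

Hypothesis hf' : forall a u, I01c u -> deriv_within I01c (f a) u (fp a u) /\ fp a u > 0.
Hypothesis hprob : forall th, D0 th -> prob (p th).
Hypothesis halpha : forall th, D0 th -> forall a, p th a > 0 ->
  f a (p th a) = - alpha th - sumn n (fun k => th k * H k a).
Hypothesis hj : (j < n)%nat.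
Hypothesis hline : exists delta, delta > 0 /\ forall t, Rabs t < delta -> D0 (shift theta j t).
Hypothesis hdalpha : derivable_pt_lim (fun t => alpha (shift theta j t)) 0 dalpha.

Lemma prob_at_theta : prob (p theta).
Proof.
  destruct hline as [delta [Hdelta Hline]].
  rewrite <- (shift0 theta j). apply hprob, Hline. rewrite Rabs_R0; lra.
Qed.

Lemma partial_p_support a da : p theta a > 0 ->
  derivable_pt_lim (fun t => p (shift theta j t) a) 0 da ->
  da = - (dalpha + H j a) / fp a (p theta a).
Proof.
  intros Hpos Hda. set (u := fun t => p (shift theta j t) a) in Hda.
  assert (Hu0 : u 0 = p theta a) by (unfold u; rewrite shift0; reflexivity).
  destruct hline as [delta0 [Hdelta0 Hline]].
  destruct (derivable_pos_near u da Hda ltac:(rewrite Hu0; exact Hpos))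
    as [delta1 [Hdelta1 Hupos]].
  set (c := sumn n (fun k => theta k * H k a)).
  assert (Hv : derivable_pt_lim (fun t => - alpha (shift theta j t) - (c + t * H j a)) 0
                (- dalpha - (0 + 1 * H j a))).
  { apply (derivable_pt_lim_minus (fun t => - alpha (shift theta j t))).
    - apply (derivable_pt_lim_opp (fun t => alpha (shift theta j t))); exact hdalpha.
    - apply (derivable_pt_lim_plus (fun _ => c) (fun t => t * H j a)).
      + apply derivable_pt_lim_const.
      + apply (derivable_pt_lim_scal_right id 0 1 (H j a)), derivable_pt_lim_id. }
  destruct (hf' a (u 0)) as [Hfa Hfp]; [rewrite Hu0; split; [lra|apply prob_le1, prob_at_theta]|].
  rewrite (implicit_derivative I01c (f a) u _ (fp a (u 0)) da _ (Rmin delta0 delta1)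
             Hfa ltac:(lra) Hda Hv (Rmin_pos _ _ Hdelta0 Hdelta1)), Hu0; [field; rewrite Hu0 in Hfp; lra|].
  intros t Ht.
  assert (HD : D0 (shift theta j t)) by (apply Hline; eapply Rlt_le_trans; [exact Ht|apply Rmin_l]).
  assert (Hut : u t > 0) by (apply Hupos; eapply Rlt_le_trans; [exact Ht|apply Rmin_r]).
  unfold u in *. split; [split; [exact Hut|apply prob_le1, hprob, HD]|].
  rewrite halpha by assumption. unfold c. rewrite sumn_shift by exact hj. ring.
Qed.

(* Off the support, t = 0 minimises p_{theta + t e_j, a} >= 0. *)
Lemma partial_p_off_support a da : p theta a = 0 ->
  derivable_pt_lim (fun t => p (shift theta j t) a) 0 da -> da = 0.
Proof.
  intros Hzero Hda. destruct hline as [delta [Hdelta Hline]].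
  apply (derivable_local_min _ da delta Hda Hdelta). intros t Ht.
  rewrite shift0, Hzero. apply (proj1 (hprob _ (Hline t Ht))).
Qed.

Lemma partial_p a da :
  derivable_pt_lim (fun t => p (shift theta j t) a) 0 da ->
  da = restr (p theta) (fun a => - (dalpha + H j a) * / fp a (p theta a)) a.
Proof.
  intros Hda. unfold restr. destruct (Rlt_dec 0 (p theta a)) as [Hpos|Hnpos].
  - exact (partial_p_support a da Hpos Hda).
  - apply (partial_p_off_support a da); [|exact Hda].
    pose proof (proj1 prob_at_theta a). lra.
Qed.

(* z(theta) > 0: the support of p_theta is nonempty and phi_a > 0 on it. *)
Lemma partition_sum_pos z :
  has_sumA (restr (p theta) (fun a => / fp a (p theta a))) z -> z > 0.
Proof.
  intros Hz. pose proof prob_at_theta as Hprob.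
  assert (Hphi : forall a, p theta a > 0 -> / fp a (p theta a) > 0).
  { intros a Ha. apply Rinv_0_lt_compat, (hf' a (p theta a)). split; [exact Ha|apply prob_le1, Hprob]. }
  destruct (prob_charges_some _ Hprob) as [a0 Ha0].
  assert (Hterm : restr (p theta) (fun a => / fp a (p theta a)) a0 <= z).
  { apply (has_sum_ge_term _ _ a0 Hz). intro a. unfold restr.
    destruct (Rlt_dec 0 (p theta a)) as [Ha|]; [left; apply Hphi, Ha|lra]. }
  unfold restr in Hterm. destruct (Rlt_dec 0 (p theta a0)); [|lra].
  pose proof (Hphi a0 Ha0). lra.
Qed.

(* Summing the formula for the derivatives against the regularity condition
   sum_a d_a = 0 gives  sum'_a phi_a H_j(a) = - alpha_j z. *)
Lemma weighted_H_sum (d : A -> R) z :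
  (forall a, derivable_pt_lim (fun t => p (shift theta j t) a) 0 (d a)) ->
  has_sumA d 0 ->
  has_sumA (restr (p theta) (fun a => / fp a (p theta a))) z ->
  has_sumA (restr (p theta) (fun a => / fp a (p theta a) * H j a)) (- dalpha * z).
Proof.
  intros Hd Hsd Hz.
  pose proof (has_sum_lincomb _ _ (-1) (- dalpha) _ _ Hsd Hz) as Hs.
  replace (-1 * 0 + - dalpha * z) with (- dalpha * z) in Hs by ring.
  replace (restr (p theta) (fun a => / fp a (p theta a) * H j a))
    with (fun a => -1 * d a + - dalpha * restr (p theta) (fun a => / fp a (p theta a)) a);
    [exact Hs|].
  apply functional_extensionality; intro a. rewrite (partial_p a (d a) (Hd a)).
  unfold restr. destruct (Rlt_dec 0 (p theta a)); ring.
Qed.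

End PartialDerivatives.

Theorem mainTheorem9
  (A : Type) (h f fp : A -> R -> R) (n : nat) (H : nat -> A -> R)
  (D0 : (nat -> R) -> Prop) (p : (nat -> R) -> A -> R) (alpha : (nat -> R) -> R)
  (theta : nat -> R) (j : nat) (z : R)
  (* A finite or countable *)
  (hA : exists enc : A -> nat, forall x y, enc x = enc y -> x = y)
  (* standing assumptions on h_a, f_a *)
  (hhf : standing_h_f h f)
  (* H_j bounded below *)
  (hH : forall k, (k < n)%nat -> exists M, forall a, M <= H k a)
  (* f_a differentiable on (0,1] with derivative f_a' = fp a > 0 *)
  (hf' : forall a u, I01c u -> deriv_within I01c (f a) u (fp a u) /\ fp a u > 0)
  (* D0 open, D0 subset of D, p_theta' and alpha(theta') as in the context *)
  (hD0 : openn n D0)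
  (hvp : forall th, D0 th -> variational_principle h n H th (p th))
  (halpha : forall th, D0 th -> forall a, p th a > 0 ->
       f a (p th a) = - alpha th - sumn n (fun k => th k * H k a))
  (htheta : D0 theta)
  (hdalpha : differentiable_at n alpha theta)
  (hdp : forall a, differentiable_at n (fun th => p th a) theta)
  (hj : (j < n)%nat)
  (* regularity condition: sum_a d/dtheta_j p_{theta,a} = 0 *)
  (hreg : exists d : A -> R,
       (forall a, derivable_pt_lim (fun t => p (shift theta j t) a) 0 (d a)) /\
       has_sumA d 0)
  (* z(theta) = sum'_a phi_a(p_{theta,a}) < +oo, phi_a = 1 / f_a' *)
  (hz : has_sumA (restr (p theta) (fun a => / fp a (p theta a))) z) :
  exists S : R,
    has_sumA (restr (p theta) (fun a => / fp a (p theta a) * H j a)) S /\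
    derivable_pt_lim (fun t => alpha (shift theta j t)) 0 (- (/ z) * S).
Proof.
  destruct hdalpha as [g Hg].
  pose proof (gradient_partial n alpha theta g j hj Hg) as Hpartial.
  assert (Hprob : forall th, D0 th -> prob (p th)) by (intros th Hth; exact (proj1 (hvp th Hth))).
  pose proof (openn_coordinate_line n D0 theta j hj hD0 htheta) as Hline.
  destruct hreg as [d [Hd Hsd]].
  pose proof (partition_sum_pos _ f _ _ _ _ _ hf' Hprob Hline z hz) as Hzpos.
  exists (- g j * z); split.
  - exact (weighted_H_sum _ f _ _ _ _ _ _ _ _ (g j) hf' Hprob halpha hj Hline Hpartial d z Hd Hsd hz).
  - replace (- / z * (- g j * z)) with (g j) by (field; lra). exact Hpartial.
Qed.
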